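(* Let $N=\binom n2$, let $s_{i_1}\cdots s_{i_N}=(s_1\cdots s_{n-1})(s_1\cdots s_{n-2})\cdots(s_1)$, and let $\Phi_{id,w_0}:\mathbb{R}_{>0}^N\to\mathbb{R}^{2^n-2}$ send $\mathbf a=(a_1,\dots,a_N)$ to the Plücker coordinates $(P_I(M(\mathbf a)))_{\emptyset\ne I\subsetneq[n]}$ of $M(\mathbf a)=x_{i_1}(a_1)\cdots x_{i_N}(a_N)$; this map is injective, with inverse $\Psi_{id,w_0}$ on its image. Then $\Psi_{id,w_0}$ can be expressed by Laurent monomials in the extremal non-zero Plücker coordinates: for each $j\in[N]$ there is a Laurent monomial $m_j$ in the variables $P_I$, $I$ extremal, such that $a_j=m_j\big((P_I(M(\mathbf a)))_{I\text{ extremal}}\big)$ for all $\mathbf a\in\mathbb{R}_{>0}^N$.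
   Context: $x_k(a)$ is the $n\times n$ identity matrix with an extra entry $a$ in row $k$, column $k+1$. $P_I(M)$ is the minor of $M$ in rows $1,\dots,|I|$ and columns $I$. For flags of the form $M(\mathbf a)$ with $\mathbf a>0$, all $P_I$ are positive, and the extremal indices are defined as follows: for a $k$-subset $I$, let $B=\{i\in I:\exists j\notin I,\ i<j,\ P_{(I\setminus i)\cup j}\ne0\}$; if $P_I\ne0$ and $B\neq\emptyset$, set $b=\max B$, $a=\max\{j\notin I: P_{(I\setminus b)\cup j}\ne0\}$ and $\Xi(I)=(I\setminus b)\cup a$, otherwise $\Xi(I)=I$; with $I_k$ the Gale-minimal $k$-subset with $P_{I_k}\ne 0$ (here $I_k=[k]$), the extremal indices are the sets $\Xi^m(I_k)$, $m\ge0$, $k\in[n-1]$. (Concretely, these are the sets $\{1,\dots,m\}\cup\{k,\dots,n\}$ of size at most $n-1$.) *)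

From mathcomp Require Import all_boot all_order all_algebra.
Set Implicit Arguments. Unset Strict Implicit. Unset Printing Implicit Defensive.
Import Order.TTheory GRing.Theory Num.Theory.
Local Open Scope ring_scope.

Section Defs.
Variable R : realFieldType.
Variable n : nat.

(* x_k(a), k 1-based in [n-1]: identity plus entry a in row k, column k+1
   (0-based: row k-1, column k). *)
Definition xmat (k : nat) (a : R) : 'M[R]_n :=
  \matrix_(i, j) ((i == j)%:R + (if (val i == k.-1)%N && (val j == k) then a else 0)).

(* the reduced word (s_1 ... s_{n-1})(s_1 ... s_{n-2}) ... (s_1), as a list of
   1-based indices i_1, ..., i_N *)
Definition w0word : seq nat :=
  flatten [seq iota 1 (n.-1 - t) | t <- iota 0 n.-1].

Definition Mw (a : 'I_('C(n, 2)) -> R) : 'M[R]_n :=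
  foldr (fun (j : 'I_('C(n, 2))) acc => xmat (nth 0%N w0word j) (a j) *m acc) 1%:M (enum 'I_('C(n, 2))).

Lemma card_set_le (I : {set 'I_n}) : (#|I| <= n)%N.
Proof. by rewrite -[X in (_ <= X)%N](card_ord n) max_card. Qed.

Definition Pl (M : 'M[R]_n) (I : {set 'I_n}) : R :=
  \det (\matrix_(r < #|I|, c < #|I|)
          M (widen_ord (card_set_le I) r) (@enum_val _ (mem I) c)).

Definition Bset (M : 'M[R]_n) (I : {set 'I_n}) : {set 'I_n} :=
  [set i in I | [exists j, (j \notin I) && (val i < val j)%N
                            && (Pl M ((I :\ i) :|: [set j]) != 0)]].

Definition Xi (M : 'M[R]_n) (I : {set 'I_n}) : {set 'I_n} :=
  if Pl M I != 0 then
    match [pick i0 in Bset M I] with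
    | Some i0 =>
        let b := [arg max_(i > i0 in Bset M I) val i] in
        let A := [set j | (j \notin I) && (Pl M ((I :\ b) :|: [set j]) != 0)] in
        match [pick j0 in A] with
        | Some j0 => (I :\ b) :|: [set [arg max_(j > j0 in A) val j]]
        | None => I
        end
    | None => I
    end
  else I.

Definition gale_le (I J : {set 'I_n}) : bool :=
  (#|I| == #|J|) &&
  [forall r : 'I_n, (val r < #|I|)%N ==>
     (nth 0%N (map val (enum I)) r <= nth 0%N (map val (enum J)) r)%N].

Definition gale_min (M : 'M[R]_n) (k : nat) (I : {set 'I_n}) : Prop :=
  #|I| = k /\ Pl M I != 0 /\
  forall J : {set 'I_n}, #|J| = k -> Pl M J != 0 -> gale_le I J.

Definition extremal (M : 'M[R]_n) (I : {set 'I_n}) : Prop :=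
  exists k : nat, (1 <= k <= n.-1)%N /\
  exists Ik : {set 'I_n}, gale_min M k Ik /\
  exists m : nat, I = iter m (Xi M) Ik.

End Defs.

From mathcomp Require Import all_boot all_order all_algebra.
From mathcomp Require Import zify ring.
Set Implicit Arguments. Unset Strict Implicit. Unset Printing Implicit Defensive.
Import Order.TTheory GRing.Theory Num.Theory.
Local Open Scope ring_scope.

(* M(a) is the product of the blocks x_1 ... x_{n-1-s}, s = 0, ..., n-2, and the
   extremal indices are the sets S(m,L) = {1..m} u {n-L+1..n}, with
   Xi(S(m,L)) = S(m-1,L+1).  As M(a) is unitriangular, P_{S(m,L)} is the L x L
   minor in rows m+1..m+L and the last L columns; peeling off one block at a time
   by row operations shows that it equals prod_{t<L} g(t, m+L-1-t), where g(s,r) is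
   the product of the parameters of block s from position r on.  Hence
   g(s,r) = P_{S(r,s+1)} / P_{S(r+1,s)}, and each parameter g(s,r) / g(s,r+1) is a
   Laurent monomial in at most four extremal coordinates. *)

Lemma det_subr_next_row (R : comPzRingType) L (A B : 'M[R]_L.+1) (beta : 'I_L.+1 -> R) :
  (forall u v, B u v =
     if (u < L)%N then A u v - beta u * A (inord u.+1) v else A u v) ->
  \det B = \det A.
Proof.
move=> defB.
pose V : 'M[R]_L.+1 :=
  \matrix_(u, v) ((u == v)%:R - (if val v == (val u).+1 then beta u else 0)).
have -> : B = V *m A.
  apply/matrixP => u v; rewrite defB mxE.
  under eq_bigr => w _ do rewrite mxE mulrBl.
  rewrite sumrB (bigD1 u) //= eqxx mul1r big1 ?addr0; last first.
    by move=> w /negPf; rewrite eq_sym => ->; rewrite mul0r.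
  case: ifP => u_lt.
    rewrite (bigD1 (inord u.+1)) //= inordK // eqxx big1 ?addr0 //.
    move=> w w_neq; case: eqP => [w_eq|]; last by rewrite mul0r.
    by move: w_neq; rewrite -w_eq inord_val eqxx.
  rewrite big1 ?subr0 // => w _; case: eqP => [w_eq|]; last by rewrite mul0r.
  by have := ltn_ord w; rewrite w_eq; move: u_lt (ltn_ord u); lia.
have V_trig : is_trig_mx V^T.
  apply/is_trig_mxP => i j lt_ij; rewrite !mxE.
  have -> : (j == i) = false by apply/negbTE; rewrite -(inj_eq val_inj) /=; lia.
  by rewrite ifF ?subr0 //; exact: ltn_eqF (leqW lt_ij).
rewrite det_mulmx -det_tr det_trig // big1 ?mul1r // => i _.
by rewrite !mxE eqxx (ltn_eqF (ltnSn _)) subr0.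
Qed.

Section LaurentMonomial.
Variables (T : finType) (F : fieldType).

(* Laurent monomials are encoded as lists of (variable, exponent) pairs,
   repetitions allowed. *)
Definition mono_exp (l : seq (T * int)) (x : T) : int :=
  \sum_(p <- l) (if x == p.1 then p.2 else 0).

Lemma mono_exp_neq0 l x : mono_exp l x != 0 -> x \in map fst l.
Proof.
elim: l => [|p l IH]; first by rewrite /mono_exp big_nil eqxx.
rewrite /mono_exp big_cons inE; case: (eqVneq x p.1) => //= _.
by rewrite add0r; exact: IH.
Qed.

Lemma prod_mono_exp (f : T -> F) l : {in map fst l, forall x, f x != 0} ->
  \prod_(x | mono_exp l x != 0) f x ^ mono_exp l x = \prod_(p <- l) f p.1 ^ p.2.
Proof.
move=> f_neq0.
have -> : \prod_(x | mono_exp l x != 0) f x ^ mono_exp l x = \prod_x f x ^ mono_exp l x.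
  rewrite [RHS](bigID (fun x => mono_exp l x != 0)) /= [X in _ = _ * X]big1 ?mulr1 //.
  by move=> x /negPn/eqP ->; rewrite expr0z.
elim: l f_neq0 => [|p l IH] f_neq0.
  by rewrite big_nil big1 // => x _; rewrite /mono_exp big_nil expr0z.
rewrite big_cons -IH; last by move=> x x_l; apply: f_neq0; rewrite inE x_l orbT.
rewrite -[f p.1 ^ p.2](_ : \prod_x f x ^ (if x == p.1 then p.2 else 0) = _); last first.
  by rewrite (bigD1 p.1) //= eqxx big1 ?mulr1 // => x /negPf ->; rewrite expr0z.
rewrite -big_split; apply: eq_bigr => x _ /=; rewrite /mono_exp big_cons.
case: eqVneq => [->|_]; last by rewrite add0r expr0z mul1r.
by rewrite expfzDr // f_neq0 // mem_head.
Qed.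

End LaurentMonomial.

Lemma sorted_ltn_nth_geq (s : seq nat) r : sorted ltn s -> (r < size s)%N ->
  (r <= nth 0%N s r)%N.
Proof.
move=> s_sorted; elim: r => [//|r IH] lt_r.
have := sorted_ltn_nth ltn_trans 0%N s_sorted; move/(_ r r.+1).
by rewrite !inE ltnSn => /(_ (ltnW lt_r) lt_r); have := IH (ltnW lt_r); lia.
Qed.

Lemma sorted_enum_set n (J : {set 'I_n}) : sorted ltn (map val (enum J)).
Proof.
rewrite -[enum _](eq_filter (mem_enum _)).
rewrite -(eq_filter (mem_map val_inj _)) -filter_map.
by rewrite (sorted_filter ltn_trans) // unlock val_ord_enum iota_ltn_sorted.
Qed.

Section Flag.
Variables (R : realFieldType) (n' : nat).
Local Notation n := n'.+1.

(* Entries indexed by [nat]; indices beyond [n'] are junk (by [inord]). *)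
Definition entry (M : 'M[R]_n) (i j : nat) : R := M (inord i) (inord j).

Lemma entry1 i j : (i <= n')%N -> (j <= n')%N -> entry 1%:M i j = (i == j)%:R.
Proof. by move=> le_i le_j; rewrite /entry mxE -(inj_eq val_inj) /= !inordK. Qed.

Lemma entry_xmatM k a (N : 'M[R]_n) i j : (i <= n')%N -> (1 <= k <= n')%N ->
  entry (xmat n k a *m N) i j = entry N i j + (if i == k.-1 then a * entry N k j else 0).
Proof.
move=> le_i /andP[k_ge1 le_k]; rewrite /entry mxE.
under eq_bigr => l _ do rewrite mxE mulrDl.
rewrite big_split /= (bigD1 (inord i)) //= eqxx mul1r big1 ?addr0; last first.
  by move=> l /negPf; rewrite eq_sym => ->; rewrite mul0r.
congr (_ + _); rewrite inordK //.
case: (i == k.-1); last by rewrite big1 // => l _; rewrite mul0r.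
rewrite (bigD1 (inord k)) //= inordK // eqxx big1 ?addr0 // => l l_neq.
case: eqP => [l_eq|]; last by rewrite mul0r.
by move: l_neq; rewrite -l_eq inord_val eqxx.
Qed.

Definition upper_unitri (M : 'M[R]_n) :=
  (forall i j, (j < i <= n')%N -> entry M i j = 0) /\
  (forall i, (i <= n')%N -> entry M i i = 1).

Fixpoint xword (w : seq nat) (B : nat -> R) : 'M[R]_n :=
  if w is k :: w' then xmat n k (B 0%N) *m xword w' (fun u => B u.+1) else 1%:M.

Lemma eq_xword w B B' : B =1 B' -> xword w B = xword w B'.
Proof.
elim: w B B' => [|k w IH] B B' eqB //=.
by rewrite eqB (IH _ (fun u => B' u.+1)).
Qed.

Lemma xword_cat w1 w2 B :
  xword (w1 ++ w2) B = xword w1 B *m xword w2 (fun u => B (size w1 + u)%N).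
Proof.
elim: w1 B => [|k w1 IH] B /=; first by rewrite mul1mx; exact: eq_xword.
by rewrite IH mulmxA; congr (_ *m _); exact: eq_xword.
Qed.

Lemma upper_unitri_xword w B : all (fun k => 1 <= k <= n')%N w -> upper_unitri (xword w B).
Proof.
elim: w B => [|k w IH] B /=.
  move=> _; split=> [i j lt_ji|i le_i]; last by rewrite entry1 ?eqxx.
  by rewrite entry1 ?gtn_eqF //; lia.
case/andP=> k_ok /(IH (fun u => B u.+1)) [below diag].
split=> [i j lt_ji|i le_i]; rewrite entry_xmatM //; try lia.
  rewrite below ?lt_ji // add0r; case: eqP => // i_eq.
  by rewrite below ?mulr0 //; lia.
rewrite diag //; case: eqP => [i_eq|_]; last by rewrite addr0.
by rewrite below ?mulr0 ?addr0 //; lia.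
Qed.

Lemma entry_xword_col w B c : (c <= n')%N -> all (fun k => 1 <= k < c)%N w ->
  forall i, (i <= n')%N -> entry (xword w B) i c = (i == c)%:R.
Proof.
move=> le_c; elim: w B => [|k w IH] B /=; first by move=> _ i le_i; rewrite entry1.
case/andP=> k_ok /(IH (fun u => B u.+1)) col i le_i.
rewrite entry_xmatM // ?col //; try lia.
by rewrite (_ : (k == c) = false) ?mulr0; [case: ifP; rewrite addr0 | apply/eqP; lia].
Qed.

Lemma entry_xword_iotaM k0 len B (N : 'M[R]_n) i j : (1 <= k0)%N -> (k0 + len <= n)%N ->
  (i <= n')%N -> (j <= n')%N ->
  entry (xword (iota k0 len) B *m N) i j =
  if (k0.-1 <= i < k0.-1 + len)%N
  then entry N i j + B (i - k0.-1)%N * entry (xword (iota k0 len) B *m N) i.+1 j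
  else entry N i j.
Proof.
elim: len k0 B i => [|len IH] k0 B i k0_ge1 le_len le_i le_j.
  by rewrite /= mul1mx addn0; case: ifP => //; lia.
rewrite [iota _ _]/= [xword _ _]/= -mulmxA entry_xmatM //; last by lia.
have IH' := IH k0.+1 (fun u => B u.+1) _ _ _ _ le_j.
case: (eqVneq i k0.-1) => [->|i_neq].
  rewrite IH' //; try lia.
  rewrite ifF; last by lia.
  rewrite ifT; last by lia.
  rewrite subnn; congr (_ + _ * _).
  have -> : k0.-1.+1 = k0 by lia.
  by rewrite entry_xmatM //; try lia; rewrite ifF ?addr0 //; lia.
rewrite addr0 IH' //; try lia.
case: ifP => i_in; last by rewrite ifF //; lia.
rewrite ifT; last by lia.
rewrite entry_xmatM //; try lia.
by rewrite ifF ?addr0; [congr (_ + B _ * _) | ]; lia.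
Qed.

Definition minor (M : 'M[R]_n) (rho gam : nat -> nat) (K : nat) : R :=
  \det (\matrix_(u < K, v < K) entry M (rho u) (gam v)).

Lemma eq_minor M rho rho' gam gam' K :
  {in gtn K, rho =1 rho'} -> {in gtn K, gam =1 gam'} ->
  minor M rho gam K = minor M rho' gam' K.
Proof.
move=> eq_rho eq_gam; rewrite /minor; congr (\det _); apply/matrixP => u v.
by rewrite !mxE eq_rho ?eq_gam ?unfold_in /= ?ltn_ord.
Qed.

(* Laplace expansion along the first column, which has a single 1 on the diagonal. *)
Lemma minor_unitri_shift (M : 'M[R]_n) r0 (gam : nat -> nat) K : upper_unitri M ->
  (r0 + K.+1 <= n)%N -> gam 0%N = r0 ->
  minor M (addn r0) gam K.+1 = minor M (addn r0.+1) (fun v => gam v.+1) K.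
Proof.
move=> [below diag] le_K gam0; rewrite /minor (expand_det_col _ ord0) big_ord_recl.
rewrite big1 ?addr0; last first.
  by move=> i _; rewrite mxE lift0 gam0 below ?mul0r //=; have := ltn_ord i; lia.
rewrite mxE gam0 addn0 diag; last by lia.
rewrite mul1r /cofactor addn0 expr0 mul1r; congr (\det _).
by apply/matrixP => u v; rewrite !mxE !lift0 addSnnS.
Qed.

Lemma minor_unitri_drop (M : 'M[R]_n) m L gam : upper_unitri M -> (m + L <= n)%N ->
  {in gtn m, gam =1 id} ->
  minor M (addn 0) gam (m + L) = minor M (addn m) (fun v => gam (m + v)%N) L.
Proof.
move=> M_unitri le_mL gam_id.
suff drop k : (k <= m)%N ->
    minor M (addn 0) gam (m + L) = minor M (addn k) (fun v => gam (k + v)%N) (m - k + L).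
  by rewrite (drop m) // subnn.
elim: k => [|k IH] le_k; first by rewrite subn0; exact: eq_minor.
rewrite IH; last by lia.
have -> : (m - k + L = (m - k.+1 + L).+1)%N by lia.
rewrite minor_unitri_shift //; try lia; last by rewrite addn0 gam_id //; lia.
by apply: eq_minor => // v _; rewrite addSnnS.
Qed.

(* [wsuffix s] is the reduced word from its block [s] on, block [t] being
   s_1 ... s_{n'-t}; block [s] starts at position [offset s]. *)
Definition wsuffix (s : nat) : seq nat :=
  flatten [seq iota 1 (n' - t) | t <- iota s (n' - s)].

Definition offset (s : nat) : nat := (\sum_(t < s) (n' - t))%N.

Lemma wsuffixS s : (s < n')%N -> wsuffix s = iota 1 (n' - s) ++ wsuffix s.+1.
Proof.
move=> lt_s; rewrite /wsuffix.
have -> : (n' - s = (n' - s.+1).+1)%N by lia.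
by rewrite /= -subSS subSn.
Qed.

Lemma wsuffix_n' : wsuffix n' = [::].
Proof. by rewrite /wsuffix subnn. Qed.

Lemma wsuffix_letter s x : x \in wsuffix s -> (1 <= x <= n' - s)%N.
Proof. by case/flatten_mapP => t; rewrite !mem_iota => ? ?; lia. Qed.

Lemma offsetS s : offset s.+1 = (offset s + (n' - s))%N.
Proof. by rewrite /offset big_ord_recr. Qed.

Section SuffixProducts.
Variable A : nat -> R.

Definition Msuf s := xword (wsuffix s) (fun u => A (offset s + u)%N).

Definition gtail s r := \prod_(r <= l < n' - s) A (offset s + l)%N.

Lemma MsufS s : (s < n')%N ->
  Msuf s = xword (iota 1 (n' - s)) (fun u => A (offset s + u)%N) *m Msuf s.+1.
Proof.
move=> lt_s; rewrite /Msuf wsuffixS // xword_cat size_iota; congr (_ *m _).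
by apply: eq_xword => u; rewrite offsetS addnA.
Qed.

Lemma upper_unitri_Msuf s : upper_unitri (Msuf s).
Proof. by apply: upper_unitri_xword; apply/allP => x /wsuffix_letter; lia. Qed.

Lemma entry_Msuf_col s : (s < n')%N -> forall i, (i <= n')%N ->
  entry (Msuf s.+1) i (n' - s)%N = (i == (n' - s)%N)%:R.
Proof.
by move=> lt_s; apply: entry_xword_col; [lia | apply/allP => x /wsuffix_letter; lia].
Qed.

Lemma entry_MsufE s i j : (s < n')%N -> (i <= n')%N -> (j <= n')%N ->
  entry (Msuf s) i j =
  if (i < n' - s)%N then entry (Msuf s.+1) i j + A (offset s + i)%N * entry (Msuf s) i.+1 j
  else entry (Msuf s.+1) i j.
Proof.
move=> lt_s le_i le_j; rewrite MsufS // entry_xword_iotaM //; last by lia.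
by rewrite /= subn0 add0n.
Qed.

Lemma entry_Msuf_gtail s r : (s < n')%N -> (r <= n' - s)%N ->
  entry (Msuf s) r (n' - s)%N = gtail s r.
Proof.
move=> lt_s le_r; have [d def_d] : exists d, (n' - s - r)%N = d by eexists.
elim: d r def_d le_r => [|d IH] r def_d le_r.
  have -> : r = (n' - s)%N by lia.
  rewrite entry_MsufE ?ltnn ?entry_Msuf_col ?eqxx /gtail ?big_geq //; lia.
rewrite entry_MsufE ?ifT ?entry_Msuf_col //; try lia.
rewrite (_ : (r == (n' - s)%N) = false) ?add0r; last by apply/eqP; lia.
by rewrite IH /gtail ?(big_ltn (m := r)) //; lia.
Qed.

(* Subtracting from each row but the last [A] times the next row turns those rows
   into rows of [Msuf s.+1], whose last column vanishes there; expand along it. *)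
Lemma minor_MsufS s r1 g0 L : (s < n')%N -> (g0 + L = n' - s)%N -> (r1 + L < n' - s)%N ->
  minor (Msuf s) (addn r1) (addn g0) L.+1 =
  gtail s (r1 + L) * minor (Msuf s.+1) (addn r1) (addn g0) L.
Proof.
move=> lt_s def_g0 lt_rL; rewrite /minor.
pose B : 'M[R]_L.+1 := \matrix_(u, v) if (u < L)%N
  then entry (Msuf s.+1) (r1 + u) (g0 + v) else entry (Msuf s) (r1 + u) (g0 + v).
rewrite -(det_subr_next_row (B := B) (beta := fun u => A (offset s + (r1 + u))%N)); last first.
  move=> u v; have := ltn_ord v.
  rewrite !mxE; case: ifP => // lt_u lt_v.
  rewrite inordK; last by lia.
  rewrite (entry_MsufE (s := s) (i := (r1 + u)%N)) //; try lia.
  by rewrite ifT ?addnS ?addrK //; lia.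
rewrite (expand_det_col _ ord_max) big_ord_recr /= big1 ?add0r; last first.
  move=> i _; have lt_i := ltn_ord i; rewrite !mxE /= lt_i def_g0 entry_Msuf_col //; last by lia.
  by rewrite (_ : (r1 + i == (n' - s)%N) = false) ?mul0r //; apply/eqP; lia.
rewrite !mxE /= ltnn def_g0 entry_Msuf_gtail //; last by lia.
rewrite /cofactor addnn -signr_odd odd_double expr0 mul1r; congr (_ * \det _).
by apply/matrixP => u v; rewrite !mxE !lift_max /= ltn_ord.
Qed.

Lemma minor_Msuf L s r1 g0 : (r1 + L + s <= n')%N -> (g0 + L = n - s)%N ->
  minor (Msuf s) (addn r1) (addn g0) L = \prod_(t < L) gtail (s + t) (r1 + (L - t.+1)).
Proof.
elim: L s r1 g0 => [|L IH] s r1 g0 le_rLs def_g0.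
  by rewrite /minor big_ord0 det_mx00.
rewrite minor_MsufS; try lia.
rewrite (IH s.+1) ?big_ord_recl; try lia.
rewrite addn0 subSS subn0; congr (_ * _).
by apply: eq_bigr => i _; rewrite addSnnS.
Qed.

End SuffixProducts.

(* The extremal indices: [extset m L] is {1, ..., m} u {n-L+1, ..., n} in the
   1-based numbering of the paper. *)
Definition extset (m L : nat) : {set 'I_n} :=
  [set i : 'I_n | (i < m)%N || (n - L <= i)%N].

Lemma enum_extset m L : (m + L <= n)%N ->
  map val (enum (extset m L)) = iota 0 m ++ iota (n - L) L.
Proof.
move=> le_mL; rewrite {1}/enum_mem -enumT.
rewrite (eq_filter (a2 := preim val (fun x => (x < m) || (n - L <= x))%N)); last first.
  by move=> i; rewrite /= inE.
rewrite -filter_map val_enum_ord.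
have -> : iota 0 n = iota 0 m ++ iota m (n - L - m) ++ iota (n - L) L.
  have -> : iota 0 n = iota 0 (m + ((n - L - m) + L)) by congr iota; lia.
  by rewrite iotaD iotaD add0n (_ : (m + (n - L - m) = n - L)%N) //; lia.
have all_filter_iota m0 k : {in iota m0 k, forall x, (x < m) || (n - L <= x)}%N ->
    [seq x <- iota m0 k | (x < m) || (n - L <= x)]%N = iota m0 k.
  by move=> all_in; apply/all_filterP/allP.
rewrite !filter_cat (all_filter_iota 0%N m); last by move=> x; rewrite mem_iota; lia.
rewrite (all_filter_iota (n - L)%N L); last by move=> x; rewrite mem_iota; lia.
rewrite (eq_in_filter (a2 := pred0)) ?filter_pred0 // => x.
by rewrite mem_iota /= => x_in; apply/negbTE; lia.
Qed.

Lemma card_extset m L : (m + L <= n)%N -> #|extset m L| = (m + L)%N.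
Proof. by move=> le_mL; rewrite cardE -(size_map val) enum_extset // size_cat !size_iota. Qed.

Lemma Pl_minor (M : 'M[R]_n) (I : {set 'I_n}) :
  Pl M I = minor M (addn 0) (nth 0%N (map val (enum I))) #|I|.
Proof.
rewrite /Pl /minor; congr (\det _); apply/matrixP => r c; rewrite !mxE /entry.
have lt_r := ltn_ord r; have le_I := card_set_le I.
have lt_c : (c < size (enum I))%N by rewrite -cardE.
have nth_c : nth 0%N (map val (enum I)) c = val (enum_val c).
  by rewrite (nth_map (enum_val c)) // -enum_val_nth.
congr (M _ _); apply: val_inj; rewrite /= inordK //.
- by rewrite add0n (leq_trans lt_r le_I).
- by rewrite nth_c ltn_ord.
Qed.

Definition extminor (A : nat -> R) (m L : nat) :=
  \prod_(t < L) gtail A t (m + (L - t.+1)).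

(* The columns {0, ..., m-1} are pivots of the unitriangular [Msuf A 0]; what
   remains is the corner minor of [minor_Msuf]. *)
Lemma Pl_extset A m L : (m + L <= n')%N -> Pl (Msuf A 0) (extset m L) = extminor A m L.
Proof.
move=> le_mL; rewrite Pl_minor card_extset ?enum_extset; try lia.
rewrite (minor_unitri_drop (upper_unitri_Msuf A 0)); first last.
- by move=> v; rewrite unfold_in /= => lt_v; rewrite nth_cat size_iota lt_v nth_iota.
- by lia.
rewrite (eq_minor _ (rho' := addn m) (gam' := addn (n - L))) //; last first.
  move=> v; rewrite unfold_in /= => lt_v.
  by rewrite nth_cat size_iota ltnNge leq_addr /= addKn nth_iota.
by rewrite minor_Msuf //; lia.
Qed.

Lemma extset_swap m L (b a : 'I_n) : (1 <= m)%N -> (m + L <= n')%N ->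
  b = m.-1 :> nat -> a = (n - L.+1)%N :> nat ->
  (extset m L :\ b) :|: [set a] = extset m.-1 L.+1.
Proof.
move=> m_ge1 le_mL val_b val_a; apply/setP => i; rewrite !inE.
by rewrite -!(inj_eq val_inj) /= val_b val_a; lia.
Qed.

(* The largest element of [extset m L] that can be swapped for a larger one is
   [m-1], and the largest one it can be swapped for is [n-L-1]. *)
Lemma Xi_extset (M : 'M[R]_n) m L : (1 <= m)%N -> (m + L <= n')%N ->
  Pl M (extset m L) != 0 -> Pl M (extset m.-1 L.+1) != 0 ->
  Xi M (extset m L) = extset m.-1 L.+1.
Proof.
move=> m_ge1 le_mL P_neq0 P'_neq0; rewrite /Xi P_neq0 /=.
pose b0 : 'I_n := inord m.-1; pose a0 : 'I_n := inord (n - L.+1).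
have val_b0 : b0 = m.-1 :> nat by apply: inordK; lia.
have val_a0 : a0 = (n - L.+1)%N :> nat by apply: inordK; lia.
have b0_in : b0 \in Bset M (extset m L).
  rewrite !inE val_b0 andbC; apply/andP; split; last by lia.
  apply/existsP; exists a0.
  rewrite (extset_swap _ _ val_b0 val_a0) // P'_neq0 inE andbT.
  change (val b0) with (b0 : nat); change (val a0) with (a0 : nat).
  by rewrite val_b0 val_a0; lia.
case: pickP => [i0 i0_in|none]; last by move: (none b0); rewrite b0_in.
case: arg_maxnP => [//|b b_in b_max].
have val_b : b = m.-1 :> nat.
  have ge_b : (b0 <= b)%N := b_max b0 b0_in.
  move: b_in; rewrite !inE => /andP[b_ext /existsP[j /andP[/andP[j_out lt_bj] _]]].
  have lt_bj' : (b < j)%N := lt_bj; move: j_out; rewrite inE; have := ltn_ord j; lia.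
have a0_in : a0 \in [set j | (j \notin extset m L) &&
                              (Pl M ((extset m L :\ b) :|: [set j]) != 0)].
  by rewrite inE (extset_swap _ _ val_b val_a0) // P'_neq0 inE val_a0 andbT; lia.
case: pickP => [j1 j1_in|none]; last by move: (none a0); rewrite a0_in.
case: arg_maxnP => [//|a a_in a_max].
have val_a : a = (n - L.+1)%N :> nat.
  have ge_a : (a0 <= a)%N := a_max a0 a0_in.
  by move: a_in; rewrite !inE => /andP[a_out _]; have := ltn_ord a; lia.
by rewrite (extset_swap _ _ val_b val_a).
Qed.

Lemma gale_min_extset (M : 'M[R]_n) k : (1 <= k <= n')%N -> Pl M (extset k 0) != 0 ->
  gale_min M k (extset k 0).
Proof.
move=> k_ok P_neq0; have card_k : #|extset k 0| = k by rewrite card_extset ?addn0 //; lia.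
split=> //; split=> // J card_J _.
rewrite /gale_le card_k card_J eqxx /=; apply/forallP => r; apply/implyP => lt_r.
rewrite enum_extset ?cats0 ?nth_iota //=; last by lia.
by apply: sorted_ltn_nth_geq; [exact: sorted_enum_set | rewrite size_map -cardE card_J].
Qed.

Section NonvanishingExtremalMinors.
Variable M : 'M[R]_n.
Hypothesis Pl_extset_neq0 : forall m L, (m + L <= n')%N -> Pl M (extset m L) != 0.

Lemma iter_Xi_extset L m : (m + L <= n')%N -> iter L (Xi M) (extset (m + L) 0) = extset m L.
Proof.
elim: L m => [|L IH] m le_mL; first by rewrite addn0.
rewrite iterS -addSnnS IH; last by lia.
by rewrite Xi_extset //; try lia; apply: Pl_extset_neq0; lia.
Qed.

Lemma extremal_extset m L : (1 <= m + L <= n')%N -> extremal M (extset m L).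
Proof.
move=> mL_ok; exists (m + L)%N; split => //; exists (extset (m + L) 0); split.
  by apply: gale_min_extset => //; apply: Pl_extset_neq0; lia.
by exists L; rewrite iter_Xi_extset //; lia.
Qed.

End NonvanishingExtremalMinors.

Lemma offset_n' : offset n' = 'C(n, 2).
Proof.
rewrite /offset; elim: n' => [|k IH]; first by rewrite big_ord0.
rewrite big_ord_recl subn0 (eq_bigr (fun t : 'I_k => k - t)%N) => [|t _]; last first.
  by rewrite lift0 subSS.
by rewrite IH [in RHS]binS bin1 addnC.
Qed.

Lemma size_wsuffix s : (s <= n')%N -> (offset s + size (wsuffix s))%N = offset n'.
Proof.
move=> le_s; have [d def_d] : exists d, (n' - s)%N = d by eexists.
elim: d s def_d le_s => [|d IH] s def_d le_s.
  have -> : s = n' by lia.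
  by rewrite wsuffix_n' addn0.
by rewrite wsuffixS ?size_cat ?size_iota ?addnA -?offsetS ?IH //; lia.
Qed.

Lemma w0word_wsuffix : w0word n = wsuffix 0.
Proof. by rewrite /w0word /wsuffix /= subn0. Qed.

Lemma xword_foldr w B :
  xword w B = foldr (fun t M => xmat n (nth 0%N w t) (B t) *m M) 1%:M (iota 0 (size w)).
Proof. by elim: w B => [|k w IH] B //=; rewrite IH (iotaDl 1 0) foldr_map. Qed.

(* The parameters as a sequence indexed by [nat], padded with [1] beyond [N]. *)
Definition aseq (a : 'I_('C(n, 2)) -> R) (t : nat) : R := odflt 1 (omap a (insub t)).

Lemma Mw_Msuf a : Mw a = Msuf (aseq a) 0.
Proof.
have foldr_val (l : seq 'I_('C(n, 2))) :
    foldr (fun (j : 'I_('C(n, 2))) M => xmat n (nth 0%N (w0word n) j) (a j) *m M) 1%:M l =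
    foldr (fun t M => xmat n (nth 0%N (w0word n) t) (aseq a t) *m M) 1%:M (map val l).
  by elim: l => [|j l IHl] //=; rewrite IHl /aseq valK.
rewrite /Mw foldr_val val_enum_ord /Msuf xword_foldr -offset_n' -(size_wsuffix (leq0n n')).
by rewrite -w0word_wsuffix /offset big_ord0.
Qed.

Lemma offset_decomp t : (t < offset n')%N ->
  exists s r, [/\ (s < n')%N, (r < n' - s)%N & t = (offset s + r)%N].
Proof.
suff decomp s : (t < offset s)%N -> (s <= n')%N ->
    exists s0 r, [/\ (s0 < s)%N, (r < n' - s0)%N & t = (offset s0 + r)%N].
  by move=> lt_t; have [s0 [r [? ? ?]]] := decomp n' lt_t (leqnn _); exists s0, r.
elim: s => [|s IH] lt_t le_s; first by rewrite /offset big_ord0 in lt_t.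
case: (ltnP t (offset s)) => [lt_ts|le_st].
  by have [s0 [r [? ? ?]]] := IH lt_ts (ltnW le_s); exists s0, r; split => //; lia.
by exists s, (t - offset s)%N; move: lt_t; rewrite offsetS; split => //; lia.
Qed.

Section ParameterRecovery.
Variable A : nat -> R.
Hypothesis A_gt0 : forall t, 0 < A t.

Lemma gtail_gt0 s r : 0 < gtail A s r.
Proof. exact: prodr_gt0. Qed.

Lemma extminor_gt0 m L : 0 < extminor A m L.
Proof. by apply: prodr_gt0 => t _; apply: gtail_gt0. Qed.

Lemma extminorS m L : extminor A m L.+1 = extminor A m.+1 L * gtail A L m.
Proof.
rewrite /extminor big_ord_recr /= subnn addn0; congr (_ * _).
by apply: eq_bigr => t _; congr (gtail _ _ _); have := ltn_ord t; lia.
Qed.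

Lemma gtailS s r : (r < n' - s)%N -> gtail A s r = A (offset s + r)%N * gtail A s r.+1.
Proof. by move=> lt_r; rewrite /gtail big_ltn. Qed.

Lemma gtail_end s : gtail A s (n' - s) = 1.
Proof. by rewrite /gtail big_geq. Qed.

(* [A (offset s + r) = gtail s r / gtail s r.+1], and [gtail s r] is the ratio
   of extremal minors [extminor r s.+1 / extminor r.+1 s] by [extminorS]; the
   second factor is trivial at the end of block [s]. *)
Definition coord_exps (s r : nat) : seq (nat * nat * int) :=
  [:: (r, s.+1, 1); (r.+1, s, -1)] ++
  if (r.+1 < n' - s)%N then [:: (r.+1, s.+1, -1); (r.+2, s, 1)] else [::].

Lemma coord_exps_ok s r : (r < n' - s)%N ->
  all (fun p => 1 <= p.1.1 + p.1.2 <= n')%N (coord_exps s r).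
Proof. by move=> lt_r; rewrite /coord_exps; case: ifP => /= lt_r1; lia. Qed.

Lemma prod_coord_exps s r : (r < n' - s)%N ->
  \prod_(p <- coord_exps s r) extminor A p.1.1 p.1.2 ^ p.2 = A (offset s + r)%N.
Proof.
move=> lt_r; have ext_neq0 m L : extminor A m L != 0 by rewrite gt_eqF ?extminor_gt0.
rewrite big_cat !big_cons big_nil /= expr1z exprN1 mulr1 extminorS gtailS //.
case: ifP => lt_r1; last first.
  have -> : r.+1 = (n' - s)%N by lia.
  by rewrite big_nil gtail_end; field; rewrite ext_neq0.
rewrite !big_cons big_nil /= expr1z exprN1 extminorS.
by field; rewrite !ext_neq0 gt_eqF ?gtail_gt0.
Qed.

End ParameterRecovery.

Lemma coord_Laurent (j : 'I_('C(n, 2))) : exists e : {set 'I_n} -> int,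
  forall a : 'I_('C(n, 2)) -> R, (forall j, 0 < a j) ->
    (forall I, e I != 0 -> extremal (Mw a) I) /\
    a j = \prod_(I | e I != 0) Pl (Mw a) I ^ e I.
Proof.
have lt_j : (j < offset n')%N by rewrite offset_n'.
have [s [r [lt_s lt_r val_j]]] := offset_decomp lt_j.
pose mono := [seq (extset p.1.1 p.1.2, p.2) | p <- coord_exps s r].
have mono_ext I : I \in map fst mono -> exists m L, I = extset m L /\ (1 <= m + L <= n')%N.
  rewrite -map_comp => /mapP[p p_in ->]; exists p.1.1, p.1.2; split => //.
  exact: (allP (coord_exps_ok lt_r)).
exists (mono_exp mono) => a a_gt0.
have A_gt0 t : 0 < aseq a t by rewrite /aseq; case: insubP => [u _ _|_] /=.
have Pl_Mw m L : (m + L <= n')%N -> Pl (Mw a) (extset m L) = extminor (aseq a) m L.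
  by move=> le_mL; rewrite Mw_Msuf Pl_extset.
have Pl_neq0 m L : (m + L <= n')%N -> Pl (Mw a) (extset m L) != 0.
  by move=> le_mL; rewrite Pl_Mw // gt_eqF ?extminor_gt0.
split.
  by move=> I /mono_exp_neq0 /mono_ext [m [L [-> mL]]]; apply: extremal_extset.
rewrite prod_mono_exp; last by move=> I /mono_ext [m [L [-> mL]]]; apply: Pl_neq0; lia.
have -> : a j = aseq a (offset s + r) by rewrite /aseq -val_j valK.
rewrite -(prod_coord_exps A_gt0 lt_r) big_map; apply: eq_big_seq => p p_in /=.
by rewrite Pl_Mw //; have := allP (coord_exps_ok lt_r) p p_in; lia.
Qed.

End Flag.

Theorem mainTheorem9 (R : realFieldType) (n : nat) :
  exists e : 'I_('C(n, 2)) -> {set 'I_n} -> int,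
    forall a : 'I_('C(n, 2)) -> R, (forall j, 0 < a j) ->
      forall j : 'I_('C(n, 2)),
        (forall I : {set 'I_n}, e j I != 0 -> extremal (Mw a) I) /\
        a j = \prod_(I : {set 'I_n} | e j I != 0) (Pl (Mw a) I) ^ (e j I).
Proof.
case: n => [|n']; first by exists (fun _ _ => 0) => a _ [].
have [e e_Laurent] := fin_all_exists (@coord_Laurent R n').
by exists e => a a_gt0 j; apply: e_Laurent.
Qed.
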